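(* Let $R$ be a commutative ring and let $M$ be a GV-torsion $R$-module. Then $M$ is $w$-split if and only if there exists $J\in\mathrm{GV}(R)$ with $JM=0$.
   Context: $R$ is a commutative ring with identity. For an $R$-module $M$ and $s\in R$, $\eta^M_s:M\to M$ is multiplication by $s$. An ideal $J$ of $R$ is a GV-ideal if $J$ is finitely generated and the natural map $R\to\mathrm{Hom}_R(J,R)$ is an isomorphism; $\mathrm{GV}(R)$ is the set of GV-ideals. $\mathrm{tor_{GV}}(M)=\{x\in M: Jx=0\text{ for some }J\in\mathrm{GV}(R)\}$, and $M$ is GV-torsion if $\mathrm{tor_{GV}}(M)=M$. A short exact sequence $0\to A\xrightarrow{f}B\xrightarrow{g}C\to 0$ is $w$-split if there exist $J=\langle d_1,\dots,d_n\rangle\in\mathrm{GV}(R)$ and $h_1,\dots,h_n\in\mathrm{Hom}_R(C,B)$ with $gh_k=\eta^C_{d_k}$ for all $k$. A module $M$ is $w$-split if there is a $w$-split exact sequence $0\to K\to P\to M\to 0$ with $P$ projective. *)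

From HB Require Import structures.
From mathcomp Require Import all_boot all_order all_algebra.
Set Implicit Arguments. Unset Strict Implicit. Unset Printing Implicit Defensive.
Import GRing.Theory.
Local Open Scope ring_scope.

Definition ideal_gen (R : comPzRingType) (d : seq R) : R -> Prop :=
  fun x => exists c : seq R, x = \sum_(i < size d) c`_i * d`_i.

(* An R-linear map J -> R (element of Hom_R(J,R)), given by its values on J. *)
Definition hom_ideal (R : comPzRingType) (J : R -> Prop) (f : R -> R) : Prop :=
  forall a x y, J x -> J y -> f (a * x + y) = a * f x + f y.

(* J is a GV-ideal: finitely generated and the natural map
   R -> Hom_R(J,R), r |-> (x |-> r x), is an isomorphism. *)
Definition GV_ideal (R : comPzRingType) (J : R -> Prop) : Prop :=
  [/\ exists d : seq R, forall x, J x <-> ideal_gen d x,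
      forall r : R, (forall x, J x -> r * x = 0) -> r = 0 &
      forall f : R -> R, hom_ideal J f ->
        exists r : R, forall x, J x -> f x = r * x].

Definition tor_GV (R : comPzRingType) (M : lmodType R) (x : M) : Prop :=
  exists J : R -> Prop, GV_ideal J /\ forall a, J a -> a *: x = 0.

Definition GV_torsion (R : comPzRingType) (M : lmodType R) : Prop :=
  forall x : M, tor_GV x.

Definition projective (R : comPzRingType) (P : lmodType R) : Prop :=
  forall (B C : lmodType R) (g : {linear B -> C}) (f : {linear P -> C}),
    (forall c, exists b, g b = c) ->
    exists h : {linear P -> B}, forall p, g (h p) = f p.

Definition short_exact (R : comPzRingType) (A B C : lmodType R)
  (f : {linear A -> B}) (g : {linear B -> C}) : Prop :=
  [/\ injective f,
      forall c, exists b, g b = c &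
      forall b, g b = 0 <-> exists a, f a = b].

Definition w_split_seq (R : comPzRingType) (A B C : lmodType R)
  (f : {linear A -> B}) (g : {linear B -> C}) : Prop :=
  exists d : seq R, GV_ideal (ideal_gen d) /\
    exists h : 'I_(size d) -> {linear C -> B},
      forall k x, g (h k x) = d`_k *: x.

Definition w_split_module (R : comPzRingType) (M : lmodType R) : Prop :=
  exists (K P : lmodType R) (f : {linear K -> P}) (g : {linear P -> M}),
    [/\ projective P, short_exact f g & w_split_seq f g].

From HB Require Import structures.
From mathcomp Require Import all_boot all_order all_algebra.
From mathcomp Require Import finmap.
From mathcomp Require Import multinomials.monalg.
Set Implicit Arguments. Unset Strict Implicit. Unset Printing Implicit Defensive.
Import GRing.Theory.
Local Open Scope ring_scope.

(* (=>) A projective module is a retract of a free module, and free modules are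
   GV-torsion-free because a GV-ideal has zero annihilator in R. Hence each
   splitting map h_k : M -> P of a w-split presentation vanishes on the
   GV-torsion module M, so d_k M = g (h_k M) = 0 and <d_1, ..., d_n> kills M.
   (<=) If a GV-ideal <d_1, ..., d_n> kills M, then the presentation of M by the
   free module on M is w-split with all h_k = 0. *)

(* The scaling is defined here rather than taken from monalg, which provides it
   only over nonzero rings, whereas R may be the zero ring. *)
Definition freemod (R : comPzRingType) (X : choiceType) := {malg R[X]}.
HB.instance Definition _ R X := GRing.Zmodule.on (@freemod R X).

Section FreeModule.
Variables (R : comPzRingType) (X : choiceType).
Implicit Types (c : R) (g : freemod R X) (k : X).

Definition freemod_scale c g : freemod R X :=
  \sum_(k <- msupp g) << c * g@_k *g k >>.

Lemma mcoeff_freemod_scale c g k : (freemod_scale c g)@_k = c * g@_k.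
Proof.
rewrite {2}[g]monalgE !raddf_sum mulr_sumr.
by apply: eq_bigr => i _ /=; rewrite !mcoeffU mulrnAr.
Qed.

Fact freemod_scaleA c1 c2 g :
  freemod_scale c1 (freemod_scale c2 g) = freemod_scale (c1 * c2) g.
Proof. by apply/malgP => k; rewrite !mcoeff_freemod_scale mulrA. Qed.

Fact freemod_scale1 : left_id 1 freemod_scale.
Proof. by move=> g; apply/malgP => k; rewrite mcoeff_freemod_scale mul1r. Qed.

Fact freemod_scaleDr : right_distributive freemod_scale +%R.
Proof.
by move=> c g1 g2; apply/malgP => k; rewrite !(mcoeffD, mcoeff_freemod_scale) mulrDr.
Qed.

Fact freemod_scaleDl g : {morph freemod_scale^~ g : c1 c2 / c1 + c2}.
Proof.
by move=> c1 c2; apply/malgP => k; rewrite !(mcoeffD, mcoeff_freemod_scale) mulrDl.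
Qed.

HB.instance Definition _ := GRing.Zmodule_isLmodule.Build R (freemod R X)
  freemod_scaleA freemod_scale1 freemod_scaleDr freemod_scaleDl.

Lemma mcoeff_freemodZ c g k : (c *: g)@_k = c * g@_k.
Proof. exact: mcoeff_freemod_scale. Qed.

Lemma freemodU c k : << c *g k >> = c *: (<< k >> : freemod R X).
Proof. by apply/malgP => k'; rewrite mcoeff_freemodZ !mcoeffU mulr_natr. Qed.

Variables (N : lmodType R) (b : X -> N).

Definition lin_ext g : N := \sum_(k <- msupp g) g@_k *: b k.

Lemma lin_extEw (d : {fset X}) g : (msupp g `<=` d)%fset ->
  lin_ext g = \sum_(k <- d) g@_k *: b k.
Proof.
move=> le_gd; rewrite /lin_ext [LHS](big_fset_incl _ le_gd) //= => k _.
by move/mcoeff_outdom ->; rewrite scale0r.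
Qed.

Fact lin_ext_is_linear : linear lin_ext.
Proof.
move=> c g1 g2; pose d := (msupp g1 `|` msupp g2)%fset.
have le1 : (msupp g1 `<=` d)%fset by apply: fsubsetUl.
have le2 : (msupp g2 `<=` d)%fset by apply: fsubsetUr.
have le12 : (msupp (c *: g1 + g2) `<=` d)%fset.
  apply: fsubset_trans (msuppD_le _ _) _; apply: fsetSU.
  apply/fsubsetP => k; rewrite -!mcoeff_neq0 mcoeff_freemodZ.
  by apply: contra_neq => ->; rewrite mulr0.
rewrite (lin_extEw le1) (lin_extEw le2) (lin_extEw le12) scaler_sumr -big_split.
by apply: eq_bigr => k _; rewrite mcoeffD mcoeff_freemodZ scalerDl scalerA.
Qed.

HB.instance Definition _ :=
  GRing.isLinear.Build R (freemod R X) N *:%R lin_ext lin_ext_is_linear.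

Lemma lin_extU c k : lin_ext << c *g k >> = c *: b k.
Proof. by rewrite (lin_extEw msuppU_le) big_seq_fset1 mcoeffUU. Qed.

End FreeModule.

Lemma freemod_projective (R : comPzRingType) (X : choiceType) :
  projective (freemod R X).
Proof.
move=> B C g f surj.
have lift k : exists b, g b == f << 1 *g k >>.
  by have [b gb] := surj (f << 1 *g k >>); exists b; rewrite gb.
exists (lin_ext (fun k => xchoose (lift k))) => x.
rewrite [in RHS](monalgE x) /lin_ext !linear_sum; apply: eq_bigr => k _ /=.
by rewrite linearZ (eqP (xchooseP (lift k))) freemodU linearZ.
Qed.

Lemma lin_ext_id_surj (R : comPzRingType) (M : lmodType R) (x : M) :
  exists g : freemod R M, lin_ext idfun g = x.
Proof. by exists << 1 *g x >>; rewrite lin_extU scale1r. Qed.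

Section GVTorsion.
Variable R : comPzRingType.

Definition GV_torsionfree (M : lmodType R) := forall x : M, tor_GV x -> x = 0.

Lemma tor_GV_linear (M N : lmodType R) (f : {linear M -> N}) x :
  tor_GV x -> tor_GV (f x).
Proof.
case=> J [GVJ Jx]; exists J; split=> // a /Jx.
by rewrite -linearZ => ->; rewrite linear0.
Qed.

Lemma GV_ideal_ext (J J' : R -> Prop) :
  (forall x, J x <-> J' x) -> GV_ideal J -> GV_ideal J'.
Proof.
move=> eqJ [[d Jd] inj surj]; split.
- by exists d => x; rewrite -eqJ.
- by move=> r rJ; apply: inj => x /eqJ; apply: rJ.
- move=> f hf; have [|r fr] := surj f.
    by move=> a x y /eqJ Jx /eqJ Jy; apply: hf.
  by exists r => x /eqJ; apply: fr.
Qed.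

Lemma ideal_gen_nth (d : seq R) (k : 'I_(size d)) : ideal_gen d d`_k.
Proof.
exists (mkseq (fun i => (i == k)%:R) (size d)).
rewrite (bigD1 k) //= nth_mkseq // eqxx mul1r big1 ?addr0 // => i ik.
by rewrite nth_mkseq // -[nat_of_ord i == k]/(i == k) (negbTE ik) mul0r.
Qed.

Lemma ideal_gen_annihilator (M : lmodType R) (d : seq R) (x : M) :
  (forall k : 'I_(size d), d`_k *: x = 0) -> forall a, ideal_gen d a -> a *: x = 0.
Proof.
move=> dx _ [c ->]; rewrite scaler_suml big1 // => k _.
by rewrite -scalerA dx scaler0.
Qed.

Lemma freemod_GV_torsionfree (X : choiceType) : GV_torsionfree (freemod R X).
Proof.
move=> g [J [[_ inj _] Jg]]; apply/malgP => k; rewrite mcoeff0.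
apply: inj => a /Jg /(congr1 (mcoeff k)).
by rewrite mcoeff_freemodZ mcoeff0 mulrC.
Qed.

Lemma projective_GV_torsionfree (P : lmodType R) :
  projective P -> GV_torsionfree P.
Proof.
move=> projP p torp.
have [s sK] := projP _ _ (lin_ext idfun) idfun (@lin_ext_id_surj R P).
have -> : p = lin_ext idfun (s p) by rewrite sK.
by rewrite (freemod_GV_torsionfree (tor_GV_linear s torp)) linear0.
Qed.

End GVTorsion.

Section Kernel.
Variables (R : comPzRingType) (V W : lmodType R) (g : {linear V -> W}).

Definition ker_pred : {pred V} := fun x => g x == 0.

Fact ker_pred_submod_closed : submod_closed ker_pred.
Proof.
split=> [|a u v]; rewrite !unfold_in /ker_pred /= ?linear0 // linearP.
by move=> /eqP-> /eqP->; rewrite scaler0 addr0.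
Qed.

HB.instance Definition _ :=
  GRing.isSubmodClosed.Build R V ker_pred ker_pred_submod_closed.

Definition kermod := {x : V | x \in ker_pred}.
HB.instance Definition _ := [isSub of kermod for @sval V (fun x => x \in ker_pred)].
HB.instance Definition _ := [Choice of kermod by <:].
HB.instance Definition _ := [SubChoice_isSubLmodule of kermod by <:].

Lemma kermod_short_exact :
  (forall c, exists b, g b = c) -> short_exact (val : {linear kermod -> V}) g.
Proof.
move=> surj; split=> //; first exact: val_inj.
move=> b; split=> [gb0 | [a <-]]; last exact/eqP/(valP a).
have kb : b \in ker_pred by rewrite unfold_in /ker_pred /= gb0.
by exists (Sub b kb).
Qed.

End Kernel.

Section WSplit.
Variables (R : comPzRingType) (A B C : lmodType R).
Variables (f : {linear A -> B}) (g : {linear B -> C}).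

Lemma w_split_seq_of_annihilator (d : seq R) :
  GV_ideal (ideal_gen d) -> (forall (k : 'I_(size d)) (x : C), d`_k *: x = 0) ->
  w_split_seq f g.
Proof.
move=> GVd dC; exists d; split=> //.
by exists (fun _ => \0) => k x; rewrite dC linear0.
Qed.

Lemma annihilator_of_w_split_seq :
  GV_torsion C -> GV_torsionfree B -> w_split_seq f g ->
  exists J : R -> Prop, GV_ideal J /\ forall a, J a -> forall x : C, a *: x = 0.
Proof.
move=> torC tfB [d [GVd [s gs]]]; exists (ideal_gen d); split=> // a Ja x.
apply: ideal_gen_annihilator Ja => k.
by rewrite -gs (tfB _ (tor_GV_linear (s k) (torC x))) linear0.
Qed.

End WSplit.

Theorem lemma2p4 (R : comPzRingType) (M : lmodType R) :
  GV_torsion M ->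
  (w_split_module M <->
   exists J : R -> Prop, GV_ideal J /\ forall a : R, J a -> forall x : M, a *: x = 0).
Proof.
move=> torM; split.
  case=> K [P [f [g [/projective_GV_torsionfree tfP _ wsplit]]]].
  exact: annihilator_of_w_split_seq wsplit.
case=> J [GVJ JM]; have [[d Jd] _ _] := GVJ.
have GVd : GV_ideal (ideal_gen d) by apply: GV_ideal_ext GVJ => x; apply: Jd.
have dM (k : 'I_(size d)) (x : M) : d`_k *: x = 0 by apply/JM/Jd; apply: ideal_gen_nth.
pose g := lin_ext (@idfun M).
exists (kermod g), (freemod R M), val, g; split.
- exact: freemod_projective.
- exact/kermod_short_exact/lin_ext_id_surj.
- exact: w_split_seq_of_annihilator dM.
Qed.
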